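(* Let $m>0$, let $S:M\to\mathbb{R}$ be a smooth function and let $\digamma_0$ be a smooth section of the even Clifford bundle $\mathcal{C\ell}^0(M,\eta)$ which is invertible at every point and satisfies $$-\boldsymbol{\partial}S=m\,\digamma_0\gamma^{0}\digamma_0^{-1}.$$ Put $\digamma=\digamma_0\,e^{S\gamma^{21}}$. If $\digamma$ satisfies the free Dirac-Hestenes equation $$\boldsymbol{\partial}\digamma\,\gamma^{21}-m\,\digamma\gamma^{0}=0,$$ then $\digamma_0$ satisfies the massless Dirac-Hestenes equation $\boldsymbol{\partial}\digamma_0=0$.
   Context: Minkowski spacetime $M\simeq\mathbb{R}^4$ with metric $\eta=\mathrm{diag}(1,-1,-1,-1)$ and global coordinates $\{x^\mu\}$. The $1$-forms $\gamma^\mu=dx^\mu$ are regarded as sections of the Clifford bundle of differential forms $\mathcal{C\ell}(M,\eta)$; juxtaposition denotes the Clifford product, with $\gamma^\mu\gamma^\nu+\gamma^\nu\gamma^\mu=2\eta^{\mu\nu}$. $\gamma^{21}:=\gamma^2\gamma^1$ (so $(\gamma^{21})^2=-1$) and $e^{S\gamma^{21}}=\cos S+\gamma^{21}\sin S$. The Dirac operator is $\boldsymbol{\partial}=\gamma^\mu\partial_\mu$, acting on a Clifford field $\psi$ by $\boldsymbol{\partial}\psi=\gamma^\mu(\partial_\mu\psi)$ (left Clifford multiplication); on a scalar function it gives $\boldsymbol{\partial}S=\gamma^\mu\partial_\mu S=dS$. $\mathcal{C\ell}^0(M,\eta)$ is the even subbundle (sums of $0$-, $2$- and $4$-forms). 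*)

From HB Require Import structures.
From mathcomp Require Import all_boot all_order all_algebra.
From mathcomp Require Import all_classical all_reals all_analysis.
Set Implicit Arguments. Unset Strict Implicit. Unset Printing Implicit Defensive.
Import Order.TTheory GRing.Theory Num.Theory.
Import numFieldNormedType.Exports.
Local Open Scope classical_set_scope.
Local Open Scope ring_scope.

(* The real Clifford algebra Cl(1,3) of Minkowski space, realized on the  *)
(* 16-dimensional space 'rV[R]_16.  The basis blade with index a : 'I_16  *)
(* (viewed as a 4-bit mask) is the ordered product gamma^{i1}...gamma^{ik} *)
(* with i1 < ... < ik the set bits of a.                                   *)

Definition bit (n k : nat) : bool := odd (n %/ 2 ^ k).

(* number of transpositions needed to sort the concatenation a ++ b *)
Definition swaps (a b : nat) : nat :=
  \sum_(i < 4 | bit b i) \sum_(j < 4 | bit a j && (i < j)%N) 1.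

(* number of repeated generators with eta^{ii} = -1 (i = 1,2,3) *)
Definition negsq (a b : nat) : nat :=
  \sum_(i < 4 | bit a i && bit b i && (i != 0%N :> nat)) 1.

Definition bxor (a b : nat) : nat :=
  \sum_(i < 4 | bit a i != bit b i) 2 ^ i.

Definition grade (a : nat) : nat := \sum_(i < 4 | bit a i) 1.

Section Clifford.
Variable R : realType.

Notation Cl := 'rV[R]_16.

Definition blade_sign (a b : nat) : R := (-1) ^+ (swaps a b + negsq a b).

Definition clmul (x y : Cl) : Cl :=
  \row_(c < 16) \sum_(a < 16) \sum_(b < 16)
     (if bxor a b == c :> nat then blade_sign a b * x 0 a * y 0 b else 0).

Definition blade (a : 'I_16) : Cl := delta_mx 0 a.

Definition clone : Cl := blade (inord 0).
Definition scal (s : R) : Cl := s *: clone.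

(* generators gamma^mu = dx^mu, mu = 0,1,2,3 *)
Definition gam (mu : 'I_4) : Cl := blade (inord (2 ^ mu)).

Definition gam21 : Cl := clmul (gam (inord 2)) (gam (inord 1)).

(* e^{s gamma^{21}} = cos s + gamma^{21} sin s *)
Definition clexp21 (s : R) : Cl := cos s *: clone + sin s *: gam21.

Definition cl_invertible (x : Cl) : Prop :=
  exists y, clmul x y = clone /\ clmul y x = clone.

(* the inverse (0 if not invertible) *)
Definition clinv (x : Cl) : Cl :=
  xget 0 [set y | clmul x y = clone /\ clmul y x = clone].

Definition even_cl (x : Cl) : Prop :=
  forall a : 'I_16, odd (grade a) -> x 0 a = 0.

(* Calculus on M = R^4 (points are row vectors, coordinates x^mu).        *)

Definition coordvec (mu : 'I_4) : 'rV[R]_4 := delta_mx 0 mu.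

Definition partial {V : normedModType R} (f : 'rV[R]_4 -> V) (mu : 'I_4)
  (x : 'rV[R]_4) : V := derive f x (coordvec mu).

Fixpoint Ck {V : normedModType R} (k : nat) (f : 'rV[R]_4 -> V) : Prop :=
  match k with
  | 0%N => continuous f
  | k'.+1 => (forall x, differentiable f x) /\ forall mu, Ck k' (partial f mu)
  end.

Definition smooth {V : normedModType R} (f : 'rV[R]_4 -> V) : Prop :=
  forall k, Ck k f.

Definition dirac_op (psi : 'rV[R]_4 -> Cl) (x : 'rV[R]_4) : Cl :=
  \sum_(mu < 4) clmul (gam mu) (partial psi mu x).

End Clifford.

Arguments clmul {R}. Arguments blade {R}. Arguments clone {R}. Arguments scal {R}.
Arguments gam {R}. Arguments gam21 {R}. Arguments clexp21 {R}.
Arguments cl_invertible {R}. Arguments clinv {R}. Arguments even_cl {R}.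
Arguments coordvec {R}. Arguments partial {R V}. Arguments Ck {R V}.
Arguments smooth {R V}. Arguments dirac_op {R}.

From HB Require Import structures.
From mathcomp Require Import all_boot all_order all_algebra.
From mathcomp Require Import all_classical all_reals all_analysis.
From mathcomp Require Import ring.
Import Order.TTheory GRing.Theory Num.Theory.
Import numFieldNormedType.Exports.

(* Leibniz's rule gives ∂(F0 e^{Sγ21}) = (∂F0) e^{Sγ21} + (∂S) F0 e^{Sγ21} γ21,
   and the hypothesis on ∂S, multiplied on the right by F0, turns the second term
   into -m F0 γ0 e^{Sγ21} γ21.  Since γ0 commutes with γ21 and γ21² = -1, this term
   times γ21 cancels the mass term of the Dirac-Hestenes equation for F, which
   therefore reduces to (∂F0) e^{Sγ21} γ21 = 0; and e^{Sγ21} γ21 is invertible. *)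

(* Big operators do not reduce, so the blade multiplication table is checked by
   evaluating these closed forms of [swaps], [negsq] and [bxor]. *)
Definition swaps_bits (a b : nat) : nat :=
  bit b 0 * (bit a 1 + bit a 2 + bit a 3) + bit b 1 * (bit a 2 + bit a 3)
  + bit b 2 * bit a 3.

Definition negsq_bits (a b : nat) : nat :=
  (bit a 1 && bit b 1) + (bit a 2 && bit b 2) + (bit a 3 && bit b 3).

Definition bxor_bits (a b : nat) : nat :=
  (bit a 0 != bit b 0) + (bit a 1 != bit b 1) * 2 + (bit a 2 != bit b 2) * 4
  + (bit a 3 != bit b 3) * 8.

Ltac unroll_bigops :=
  rewrite ?big_mkcond /=; repeat rewrite big_ord_recr /=; rewrite ?big_ord0 /=.

Ltac case_bits a b :=
  by case: (bit a 0); case: (bit a 1); case: (bit a 2); case: (bit a 3);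
     case: (bit b 0); case: (bit b 1); case: (bit b 2); case: (bit b 3).

Lemma swapsE a b : swaps a b = swaps_bits a b.
Proof. rewrite /swaps /swaps_bits; do 6 unroll_bigops; case_bits a b. Qed.

Lemma negsqE a b : negsq a b = negsq_bits a b.
Proof. rewrite /negsq /negsq_bits; unroll_bigops; case_bits a b. Qed.

Lemma bxorE a b : bxor a b = bxor_bits a b.
Proof. rewrite /bxor /bxor_bits; unroll_bigops; case_bits a b. Qed.

Definition sign_exp (a b : nat) : nat := swaps_bits a b + negsq_bits a b.

Lemma all_ord16 (P : pred nat) : all P (iota 0 16) -> forall a : 'I_16, P a.
Proof. by move=> /allP hP a; apply: hP; rewrite mem_iota ltn_ord. Qed.

Definition blade_table_assoc (a b c : nat) : bool :=
  [&& bxor_bits a b < 16,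
      bxor_bits (bxor_bits a b) c == bxor_bits a (bxor_bits b c) &
      odd (sign_exp a b + sign_exp (bxor_bits a b) c)
        == odd (sign_exp b c + sign_exp a (bxor_bits b c))].

Definition blade_table_unit (a : nat) : bool :=
  [&& bxor_bits a 0 == a, bxor_bits 0 a == a,
      sign_exp a 0 == 0 & sign_exp 0 a == 0].

Lemma blade_table_assocP (a b c : 'I_16) : blade_table_assoc a b c.
Proof.
have table : all (fun a => all (fun b => all (blade_table_assoc a b)
  (iota 0 16)) (iota 0 16)) (iota 0 16) by vm_compute.
by have /all_ord16/(_ a)/all_ord16/(_ b)/all_ord16/(_ c) := table.
Qed.

Lemma blade_table_unitP (a : 'I_16) : blade_table_unit a.
Proof. by apply: all_ord16; vm_compute. Qed.

Lemma bxor_lt (a b : 'I_16) : bxor a b < 16.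
Proof. by have /and3P[lt_ab _ _] := blade_table_assocP a b ord0; rewrite bxorE. Qed.

Lemma bxorA (a b c : 'I_16) : bxor (bxor a b) c = bxor a (bxor b c).
Proof.
by have /and3P[_ /eqP assoc _] := blade_table_assocP a b c; rewrite !bxorE.
Qed.

Lemma bxorn0 (a : 'I_16) : bxor a 0 = a.
Proof. by have /and4P[/eqP unit _ _ _] := blade_table_unitP a; rewrite bxorE. Qed.

Lemma bxor0n (a : 'I_16) : bxor 0 a = a.
Proof. by have /and4P[_ /eqP unit _ _] := blade_table_unitP a; rewrite bxorE. Qed.

Local Open Scope ring_scope.

Lemma blade_signE (R : realType) a b : blade_sign R a b = (-1) ^+ sign_exp a b.
Proof. by rewrite /blade_sign swapsE negsqE. Qed.

Lemma blade_signA (R : realType) (a b c : 'I_16) :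
  blade_sign R a b * blade_sign R (bxor a b) c
  = blade_sign R b c * blade_sign R a (bxor b c).
Proof.
have /and3P[_ _ /eqP parity] := blade_table_assocP a b c.
by rewrite !blade_signE -!exprD -signr_odd !bxorE parity signr_odd.
Qed.

Lemma blade_signn0 (R : realType) (a : 'I_16) : blade_sign R a 0 = 1.
Proof.
by have /and4P[_ _ /eqP unit _] := blade_table_unitP a; rewrite blade_signE unit.
Qed.

Lemma blade_sign0n (R : realType) (a : 'I_16) : blade_sign R 0 a = 1.
Proof.
by have /and4P[_ _ _ /eqP unit] := blade_table_unitP a; rewrite blade_signE unit.
Qed.

Section CliffordAlgebra.
Variable R : realType.
Local Notation Cl := 'rV[R]_16.
Local Notation blade := (@blade R).
Local Notation clone := (@clone R).
Local Notation gam := (@gam R).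
Local Notation gam21 := (@gam21 R).
Local Notation clexp21 := (@clexp21 R).
Implicit Types (x y z : Cl) (k : R).

Lemma clmulDl x y z : clmul (x + y) z = clmul x z + clmul y z.
Proof.
apply/rowP=> c; rewrite !mxE -big_split; apply: eq_bigr => a _.
rewrite -big_split; apply: eq_bigr => b _; rewrite !mxE.
by case: ifP => _ /=; rewrite ?addr0 //; ring.
Qed.

Lemma clmulDr x y z : clmul x (y + z) = clmul x y + clmul x z.
Proof.
apply/rowP=> c; rewrite !mxE -big_split; apply: eq_bigr => a _.
rewrite -big_split; apply: eq_bigr => b _; rewrite !mxE.
by case: ifP => _ /=; rewrite ?addr0 //; ring.
Qed.

Lemma clmulZl k x y : clmul (k *: x) y = k *: clmul x y.
Proof.
apply/rowP=> c; rewrite !mxE mulr_sumr; apply: eq_bigr => a _.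
rewrite mulr_sumr; apply: eq_bigr => b _; rewrite !mxE.
by case: ifP; rewrite ?mulr0 // => _; ring.
Qed.

Lemma clmulZr k x y : clmul x (k *: y) = k *: clmul x y.
Proof.
apply/rowP=> c; rewrite !mxE mulr_sumr; apply: eq_bigr => a _.
rewrite mulr_sumr; apply: eq_bigr => b _; rewrite !mxE.
by case: ifP; rewrite ?mulr0 // => _; ring.
Qed.

Lemma clmul0l x : clmul 0 x = 0.
Proof. by rewrite -(scale0r (0 : Cl)) clmulZl !scale0r. Qed.

Lemma clmul0r x : clmul x 0 = 0.
Proof. by rewrite -(scale0r (0 : Cl)) clmulZr !scale0r. Qed.

Lemma clmulNl x y : clmul (- x) y = - clmul x y.
Proof. by rewrite -scaleN1r clmulZl scaleN1r. Qed.

Lemma clmulNr x y : clmul x (- y) = - clmul x y.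
Proof. by rewrite -scaleN1r clmulZr scaleN1r. Qed.

Lemma clmul_suml n (f : 'I_n -> Cl) z :
  clmul (\sum_(i < n) f i) z = \sum_(i < n) clmul (f i) z.
Proof. exact: (big_morph (clmul^~ z) (fun x y => clmulDl x y z) (clmul0l z)). Qed.

Lemma clmul_sumr n (f : 'I_n -> Cl) z :
  clmul z (\sum_(i < n) f i) = \sum_(i < n) clmul z (f i).
Proof. exact: (big_morph (clmul z) (clmulDr z) (clmul0r z)). Qed.

Lemma clmul_blade (a b : 'I_16) :
  clmul (blade a) (blade b) = blade_sign R a b *: blade (inord (bxor a b)).
Proof.
apply/rowP=> c; rewrite !mxE.
under eq_bigr => a' _ do under eq_bigr => b' _ do rewrite !mxE eqxx /=.
rewrite (bigD1 a) //= [X in _ + X]big1 ?addr0 => [|a' /negPf a'a]; last first.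
  by apply: big1 => b' _; rewrite a'a mulr0 mul0r if_same.
rewrite (bigD1 b) //= [X in _ + X]big1 ?addr0 => [|b' /negPf b'b]; last first.
  by rewrite b'b mulr0 if_same.
rewrite !eqxx !mulr1 (_ : (c == inord _) = (bxor a b == c :> nat)).
  by case: ifP; rewrite ?mulr1 ?mulr0.
by rewrite -(inj_eq val_inj) /= inordK ?bxor_lt // eq_sym.
Qed.

Lemma clmul_bladeA (a b c : 'I_16) :
  clmul (clmul (blade a) (blade b)) (blade c)
  = clmul (blade a) (clmul (blade b) (blade c)).
Proof.
rewrite !clmul_blade clmulZl clmulZr !clmul_blade !scalerA !inordK ?bxor_lt //.
by rewrite bxorA blade_signA.
Qed.

Lemma clmulA x y z : clmul (clmul x y) z = clmul x (clmul y z).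
Proof.
have assoc2 (a b : 'I_16) z' :
    clmul (clmul (blade a) (blade b)) z' = clmul (blade a) (clmul (blade b) z').
  rewrite (row_sum_delta z') !clmul_sumr; apply: eq_bigr => c _.
  by rewrite !clmulZr clmul_bladeA.
have assoc1 (a : 'I_16) y' z' :
    clmul (clmul (blade a) y') z' = clmul (blade a) (clmul y' z').
  rewrite (row_sum_delta y') clmul_sumr !clmul_suml clmul_sumr.
  by apply: eq_bigr => b _; rewrite clmulZr !clmulZl clmulZr assoc2.
rewrite (row_sum_delta x) !clmul_suml; apply: eq_bigr => a _.
by rewrite !clmulZl assoc1.
Qed.

Lemma clmul1r x : clmul x clone = x.
Proof.
rewrite /clone (row_sum_delta x) clmul_suml; apply: eq_bigr => a _.
rewrite clmulZl clmul_blade !inordK // bxorn0 blade_signn0 scale1r.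
by rewrite inord_val.
Qed.

Lemma clmul1l x : clmul clone x = x.
Proof.
rewrite /clone (row_sum_delta x) clmul_sumr; apply: eq_bigr => a _.
rewrite clmulZr clmul_blade !inordK // bxor0n blade_sign0n scale1r.
by rewrite inord_val.
Qed.

Lemma clmulVl x : cl_invertible x -> clmul (clinv x) x = clone.
Proof. by move=> /(xgetPex 0) []. Qed.

Lemma clmul_rinv_eq0 x x' y : clmul x x' = clone -> clmul y x = 0 -> y = 0.
Proof. by move=> xx' yx; rewrite -[y]clmul1r -xx' -clmulA yx clmul0l. Qed.

Lemma clmul_blade_nat (a b : nat) : (a < 16)%N -> (b < 16)%N ->
  clmul (blade (inord a)) (blade (inord b))
  = (-1) ^+ sign_exp a b *: blade (inord (bxor_bits a b)).
Proof. by move=> lt_a lt_b; rewrite clmul_blade blade_signE !inordK // bxorE. Qed.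

Lemma gamE (n : nat) : (n < 4)%N -> gam (inord n) = blade (inord (2 ^ n)).
Proof. by move=> lt_n; rewrite /gam inordK. Qed.

Lemma gam21E : gam21 = - blade (inord 6).
Proof.
by rewrite /gam21 !gamE // clmul_blade_nat // -signr_odd /= expr1 scaleN1r.
Qed.

Lemma gam21_sq : clmul gam21 gam21 = - clone.
Proof.
rewrite gam21E clmulNl clmulNr opprK clmul_blade_nat //.
by rewrite -signr_odd /= expr1 scaleN1r.
Qed.

Lemma gam0_gam21C : clmul (gam (inord 0)) gam21 = clmul gam21 (gam (inord 0)).
Proof.
rewrite gam21E clmulNl clmulNr gamE // !clmul_blade_nat //.
by rewrite -[in LHS]signr_odd -[in RHS]signr_odd.
Qed.

Lemma clexp21D s t : clmul (clexp21 s) (clexp21 t) = clexp21 (s + t).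
Proof.
rewrite /clexp21 clmulDl !clmulDr !clmulZl !clmulZr !clmul1l !clmul1r gam21_sq.
rewrite cosD sinD; move: gam21 clone => g one.
by apply/rowP => i; rewrite !mxE; ring.
Qed.

Lemma clexp21_0 : clexp21 0 = clone.
Proof. by rewrite /clexp21 cos0 sin0 scale1r scale0r addr0. Qed.

Lemma gam0_clexp21C s :
  clmul (gam (inord 0)) (clexp21 s) = clmul (clexp21 s) (gam (inord 0)).
Proof.
rewrite /clexp21 clmulDl clmulDr !clmulZl !clmulZr clmul1l clmul1r.
by rewrite gam0_gam21C.
Qed.

Lemma clexp21_gam21_eq0 s y : clmul y (clmul (clexp21 s) gam21) = 0 -> y = 0.
Proof.
apply: (@clmul_rinv_eq0 _ (clmul (- gam21) (clexp21 (- s)))).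
rewrite clmulA -[clmul gam21 _]clmulA clmulNr gam21_sq opprK clmul1l.
by rewrite clexp21D subrr clexp21_0.
Qed.

End CliffordAlgebra.

Section DirectionalDerivatives.
Context {R : realType} {V : normedModType R}.

Lemma is_derive_sumf {W : normedModType R} n (h : 'I_n -> V -> W) x v
    (dh : 'I_n -> W) :
  (forall i, is_derive x v (h i) (dh i)) ->
  is_derive x v (fun y => \sum_(i < n) h i y) (\sum_(i < n) dh i).
Proof. by move=> hh; have := is_derive_sum hh; rewrite fct_sumE. Qed.

Lemma is_derive_mxP m n (M : V -> 'M[R]_(m, n)) x v (D : 'M[R]_(m, n)) :
  is_derive x v M D <-> forall i j, is_derive x v (fun y => M y i j) (D i j).
Proof.
split=> [[dM <-] i j | hM].
  apply: DeriveDef; first exact: (derivable_mxP M x v).1 dM i j.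
  by rewrite derive_mx // mxE.
have dM : derivable M x v by apply/derivable_mxP => i j; case: (hM i j).
apply: DeriveDef => //; rewrite derive_mx //; apply/matrixP => i j.
by rewrite mxE; case: (hM i j).
Qed.

Lemma is_derive_scalel {m n : nat} (k : V -> R) (w : 'M[R]_(m, n)) x v dk :
  is_derive x v k dk -> is_derive x v (fun y => k y *: w) (dk *: w).
Proof.
move=> hk; apply/is_derive_mxP => i j; rewrite mxE mulrC.
have -> : (fun y => (k y *: w) i j) = w i j \*: k.
  by apply/funext => y; rewrite mxE mulrC.
exact: is_deriveZ.
Qed.

Lemma is_derive_comp_real {W : normedModType R} {phi : R -> W} {S : V -> R}
    {x : V} (v : V) {dphi : W} :
  differentiable S x -> is_derive (S x) 1 phi dphi ->
  is_derive x v (phi \o S) ('D_v S x *: dphi).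
Proof.
move=> dS hphi; have dphiSx : differentiable phi (S x).
  by apply/derivable1_diffP; case: hphi.
have dphiS : differentiable (phi \o S) x by exact: differentiable_comp.
apply: DeriveDef; first exact: diff_derivable.
rewrite deriveE // diff_comp // /= deriv1E; last by case: hphi.
by rewrite derive1E derive_val -deriveE.
Qed.

End DirectionalDerivatives.

Arguments is_derive_scalel {R V m n k} w {x v dk}.

Section DiracOperator.
Variable R : realType.
Local Notation Cl := 'rV[R]_16.
Local Notation clone := (@clone R).
Local Notation gam21 := (@gam21 R).
Local Notation clexp21 := (@clexp21 R).

Lemma clmul_coord (x y : Cl) c : clmul x y 0 c =
  \sum_(a < 16) \sum_(b < 16)
     (if bxor a b == c :> nat then blade_sign R a b else 0) * (x 0 a * y 0 b).
Proof.
rewrite mxE; apply: eq_bigr => a _; apply: eq_bigr => b _.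
by case: ifP; rewrite ?mul0r // mulrA.
Qed.

Lemma is_derive_clmul {V : normedModType R} {f g : V -> Cl} {x v : V}
    {df dg : Cl} :
  is_derive x v f df -> is_derive x v g dg ->
  is_derive x v (fun y => clmul (f y) (g y)) (clmul df (g x) + clmul (f x) dg).
Proof.
move=> /is_derive_mxP hf /is_derive_mxP hg; apply/is_derive_mxP => i c.
rewrite (ord1 i); under eq_fun => y do rewrite clmul_coord.
apply: is_derive_eq.
  (* each summand is differentiated by instance resolution, from [hf] and [hg] *)
  by apply: is_derive_sumf => a; apply: is_derive_sumf.
rewrite mxE !clmul_coord -big_split; apply: eq_bigr => a _.
rewrite -big_split; apply: eq_bigr => b _ /=.
by rewrite -mulrDr addrC [df 0 a * _]mulrC.
Qed.

Lemma is_derive_clexp21 (s : R) : is_derive s 1 clexp21 (clmul (clexp21 s) gam21).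
Proof.
rewrite /clexp21 clmulDl !clmulZl clmul1l gam21_sq addrC scalerN -scaleNr.
by have := is_deriveD (is_derive_scalel clone (is_derive_cos s))
                      (is_derive_scalel gam21 (is_derive_sin s)).
Qed.

Local Notation V4 := 'rV[R]_4.

Lemma partial_scal (S : V4 -> R) mu x : differentiable S x ->
  partial (fun y => scal (S y)) mu x = partial S mu x *: clone.
Proof.
move=> /(diff_derivable (v := coordvec mu))/derivableP dS.
by rewrite /partial /scal; have [_ ->] := is_derive_scalel clone dS.
Qed.

Lemma partial_mul_clexp21 (F0 : V4 -> Cl) (S : V4 -> R) mu x :
  differentiable F0 x -> differentiable S x ->
  partial (fun y => clmul (F0 y) (clexp21 (S y))) mu x
  = clmul (partial F0 mu x) (clexp21 (S x))
    + partial S mu x *: clmul (F0 x) (clmul (clexp21 (S x)) gam21).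
Proof.
move=> /(diff_derivable (v := coordvec mu))/derivableP dF0 dS.
have dE := is_derive_comp_real (coordvec mu) dS (is_derive_clexp21 (S x)).
by rewrite /partial -clmulZr; have [_ ->] := is_derive_clmul dF0 dE.
Qed.

Lemma dirac_op_mul_clexp21 (F0 : V4 -> Cl) (S : V4 -> R) x :
  differentiable F0 x -> differentiable S x ->
  dirac_op (fun y => clmul (F0 y) (clexp21 (S y))) x
  = clmul (dirac_op F0 x) (clexp21 (S x))
    + clmul (clmul (dirac_op (fun y => scal (S y)) x) (F0 x))
            (clmul (clexp21 (S x)) gam21).
Proof.
move=> dF0 dS; rewrite /dirac_op !clmul_suml -big_split /=.
apply: eq_bigr => mu _; rewrite partial_mul_clexp21 // partial_scal //.
rewrite clmulDr clmulA; congr (_ + _).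
by rewrite !clmulZr !clmulZl clmul1r clmulA.
Qed.

End DiracOperator.

Theorem mainTheorem2 (R : realType) (m : R) (S : 'rV[R]_4 -> R)
  (F0 : 'rV[R]_4 -> 'rV[R]_16) :
  0 < m ->
  smooth S ->
  smooth F0 ->
  (forall x, even_cl (F0 x)) ->
  (forall x, cl_invertible (F0 x)) ->
  (forall x, - dirac_op (fun y => scal (S y)) x
             = m *: clmul (clmul (F0 x) (gam (inord 0))) (clinv (F0 x))) ->
  let F := fun x => clmul (F0 x) (clexp21 (S x)) in
  (forall x, clmul (dirac_op F x) gam21 - m *: clmul (F x) (gam (inord 0)) = 0) ->
  forall x, dirac_op F0 x = 0.
Proof.
move=> _ /(_ 1%N) [dS _] /(_ 1%N) [dF0 _] _ F0_inv dS_F0 F F_dirac x.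
set e := clexp21 (S x).
have dS_mul_F0 : clmul (dirac_op (fun y => scal (S y)) x) (F0 x)
                 = - m *: clmul (F0 x) (gam (inord 0)).
  rewrite -[dirac_op _ x]opprK dS_F0 clmulNl clmulZl clmulA.
  by rewrite (@clmulVl R _ (F0_inv x)) clmul1r scaleNr.
have mass_term :
    clmul (clmul (- m *: clmul (F0 x) (gam (inord 0))) (clmul e gam21)) gam21
    = m *: clmul (clmul (F0 x) e) (gam (inord 0)).
  rewrite !clmulZl clmulA [clmul (clmul e _) _]clmulA gam21_sq clmulNr clmul1r.
  by rewrite clmulNr scaleNr scalerN opprK clmulA gam0_clexp21C -clmulA.
apply: (@clexp21_gam21_eq0 _ (S x)); move: (F_dirac x).
by rewrite /F dirac_op_mul_clexp21 // dS_mul_F0 clmulDl clmulA -/e mass_term addrK.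
Qed.
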